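(* Let $G=HK$ for two normal subgroups $H$ and $K$ of the finite group $G$, and let $m\ge 2$. If $M(G,H,K)$ is trivial and $H$ has exponent $m-1$, then $d^\wedge_m(H,K)=d(H,K)$.
   Context: All groups are finite; ${}^g x=gxg^{-1}$, $[x,y]=xyx^{-1}y^{-1}$. For normal subgroups $H,K$ of $G$, $H\wedge K$ is the group generated by symbols $h\wedge k$ ($h\in H,k\in K$) subject to $hh'\wedge k=({}^h h'\wedge {}^h k)(h\wedge k)$, $h\wedge kk'=(h\wedge k)({}^k h\wedge {}^k k')$, $y\wedge y=1$ for $y\in H\cap K$; $\kappa':H\wedge K\to[H,K]$, $h\wedge k\mapsto[h,k]$, and $M(G,H,K):=\ker\kappa'$. $d^\wedge_m(H,K)=|\{(h,k)\in H\times K:h^m\wedge k=1\}|/(|H||K|)$ and $d(H,K)=|\{(h,k)\in H\times K:hk=kh\}|/(|H||K|)$. *)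

From HB Require Import structures.
From mathcomp Require Import all_boot all_order all_algebra all_fingroup all_solvable.
From Stdlib Require Import ClassicalEpsilon.
Set Implicit Arguments. Unset Strict Implicit. Unset Printing Implicit Defensive.

Import GroupScope.

(* Paper conventions: ^g x = g x g^-1, [x,y] = x y x^-1 y^-1.
   MathComp: x ^ g = g^-1 x g, so the paper's ^g x is  x ^ g^-1. *)
Definition lconj (gT : finGroupType) (g x : gT) : gT := x ^ g^-1.
Definition pcomm (gT : finGroupType) (x y : gT) : gT := x * y * x^-1 * y^-1.

(* f : H x K -> L satisfies the defining relations of the nonabelian
   exterior product H /\ K (an "exterior pairing"). *)
Definition exterior_pairing (gT lT : finGroupType) (H K : {set gT})
    (f : gT -> gT -> lT) : Prop :=
  [/\ (forall h h' k, h \in H -> h' \in H -> k \in K ->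
         f (h * h') k = f (lconj h h') (lconj h k) * f h k),
      (forall h k k', h \in H -> k \in K -> k' \in K ->
         f h (k * k') = f h k * f (lconj k h) (lconj k k')) &
      (forall y, y \in H :&: K -> f y y = 1)].

(* The element  (h_1 /\ k_1) ... (h_n /\ k_n)  of H /\ K is trivial:
   it is killed by every exterior pairing into a (finite) group, i.e. by
   the universal one  H x K -> H /\ K  (H /\ K is finite for finite H, K). *)
Definition ext_word_trivial (gT : finGroupType) (H K : {set gT})
    (s : seq (gT * gT)) : Prop :=
  forall (lT : finGroupType) (f : gT -> gT -> lT),
    exterior_pairing H K f -> \prod_(p <- s) f p.1 p.2 = 1.

(* M(G,H,K) = ker (kappa' : H /\ K -> [H,K]) is trivial.  Every element of
   H /\ K is a product of generators h /\ k (since (h/\k)^-1 = h^-1 /\ ^h k). *)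
Definition trivial_M (gT : finGroupType) (H K : {set gT}) : Prop :=
  forall s : seq (gT * gT),
    all (fun p => (p.1 \in H) && (p.2 \in K)) s ->
    \prod_(p <- s) pcomm p.1 p.2 = 1 ->
    ext_word_trivial H K s.

Definition ext_trivial (gT : finGroupType) (H K : {set gT}) (h k : gT) : Prop :=
  ext_word_trivial H K [:: (h, k)].

Definition asbool (P : Prop) : bool :=
  if excluded_middle_informative P then true else false.

Local Open Scope ring_scope.

Definition d_ext (gT : finGroupType) (m : nat) (H K : {set gT}) : rat :=
  (#|[set p : gT * gT | [&& p.1 \in H, p.2 \in K &
        asbool (ext_trivial H K (p.1 ^+ m)%g p.2)]]|%:R)
  / ((#|H| * #|K|)%N%:R).

Definition d_comm (gT : finGroupType) (H K : {set gT}) : rat :=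
  (#|[set p : gT * gT | [&& p.1 \in H, p.2 \in K &
        (p.1 * p.2 == p.2 * p.1)%g]]|%:R)
  / ((#|H| * #|K|)%N%:R).

From Stdlib Require Import ClassicalEpsilon.
From HB Require Import structures.
From mathcomp Require Import all_boot all_order all_algebra all_fingroup all_solvable.

(* Since exp(H) = m - 1, every h in H satisfies h^m = h, so d^wedge_m(H,K)
   counts the pairs with h /\ k = 1.  The commutator map is an exterior
   pairing, so h /\ k = 1 forces [h,k] = 1; conversely, if [h,k] = 1 then
   h /\ k lies in M(G,H,K), which is trivial.  Both densities therefore
   count the same pairs. *)

Import GroupScope.

Lemma asboolP (P : Prop) : reflect P (asbool P).
Proof. by rewrite /asbool; case: excluded_middle_informative => ?; constructor. Qed.

Lemma pcomm_eq1 (gT : finGroupType) (h k : gT) :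
  (pcomm h k == 1) = (h * k == k * h).
Proof.
rewrite /pcomm; apply/eqP/eqP => [hk1 | ->].
  by rewrite -(mul1g (k * h)) -hk1 !mulgA !mulgKV.
by rewrite mulgK mulgV.
Qed.

Lemma pcomm_exterior_pairing (gT : finGroupType) (H K : {set gT}) :
  exterior_pairing H K (@pcomm gT).
Proof.
rewrite /exterior_pairing /pcomm /lconj; split=> [h h' k _ _ _ | h k k' _ _ _ | y _].
- by rewrite !conjgE !invgK !invMg !invgK !mulgA ?mulgKV.
- by rewrite !conjgE !invgK !invMg !invgK !mulgA ?mulgKV.
- by rewrite mulgK mulgV.
Qed.

Lemma ext_trivial_commute (gT : finGroupType) (H K : {set gT}) (h k : gT) :
  ext_trivial H K h k -> h * k = k * h.
Proof.
move=> hk1; apply/eqP; rewrite -pcomm_eq1; apply/eqP.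
by have := hk1 gT _ (@pcomm_exterior_pairing gT H K); rewrite big_seq1.
Qed.

Lemma trivial_M_ext_trivial (gT : finGroupType) (H K : {set gT}) (h k : gT) :
  trivial_M H K -> h \in H -> k \in K -> h * k = k * h -> ext_trivial H K h k.
Proof.
move=> trivM hH kK hk; apply: trivM; first by rewrite /= hH kK.
by rewrite big_seq1; apply/eqP; rewrite pcomm_eq1 hk.
Qed.

Lemma expgS_exponent (gT : finGroupType) (G : {group gT}) (x : gT) :
  x \in G -> x ^+ (exponent G).+1 = x.
Proof. by move=> Gx; rewrite expgS expg_exponent // mulg1. Qed.

Theorem mainTheorem8 (gT : finGroupType) (G H K : {group gT}) (m : nat) :
  (H <| G)%g -> (K <| G)%g -> G = (H * K)%g :> {set gT} -> (2 <= m)%N ->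
  trivial_M H K -> exponent H = m.-1 ->
  d_ext m H K = d_comm H K.
Proof.
move=> _ _ _ m_ge2 trivM expH.
rewrite /d_ext /d_comm; congr (_%:R / _)%R; apply: eq_card => -[h k].
rewrite !inE /=; have [hH | //] := boolP (h \in H); have [kK | //] := boolP (k \in K).
have -> : h ^+ m = h by rewrite -(prednK (ltnW m_ge2)) -expH expgS_exponent.
apply/asboolP/eqP => [/ext_trivial_commute // | ].
exact: trivial_M_ext_trivial.
Qed.
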